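(* Every Hopfian group $G$ has the $d$-equality property: if $H$ is a group with $G\leqslant^d H$ and $H\leqslant^d G$, then $H\cong G$.
   Context: For groups, $X\leqslant^d Y$ means there exist homomorphisms $f:X\to Y$ and $g:Y\to X$ with $g\circ f=\mathrm{id}_X$. A group is Hopfian if every surjective endomorphism of it is an automorphism. *)

Record Group : Type := MkGroup {
  carrier :> Type;
  gmul : carrier -> carrier -> carrier;
  gone : carrier;
  ginv : carrier -> carrier;
  gmul_assoc : forall x y z, gmul x (gmul y z) = gmul (gmul x y) z;
  gmul_1l : forall x, gmul gone x = x;
  gmul_1r : forall x, gmul x gone = x;
  gmul_Vl : forall x, gmul (ginv x) x = gone;
  gmul_Vr : forall x, gmul x (ginv x) = gone
}.

Definition is_hom (X Y : Group) (f : X -> Y) : Prop :=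
  forall x y : X, f (gmul X x y) = gmul Y (f x) (f y).

Definition surjective {A B : Type} (f : A -> B) : Prop :=
  forall b, exists a, f a = b.

Definition bijective {A B : Type} (f : A -> B) : Prop :=
  exists g : B -> A, (forall a, g (f a) = a) /\ (forall b, f (g b) = b).

Definition d_le (X Y : Group) : Prop :=
  exists (f : X -> Y) (g : Y -> X),
    is_hom X Y f /\ is_hom Y X g /\ (forall x : X, g (f x) = x).

Definition is_automorphism (X : Group) (f : X -> X) : Prop :=
  is_hom X X f /\ bijective f.

Definition Hopfian (X : Group) : Prop :=
  forall f : X -> X, is_hom X X f -> surjective f -> is_automorphism X f.

Definition isomorphic (X Y : Group) : Prop :=
  exists f : X -> Y, is_hom X Y f /\ bijective f.

From Stdlib Require Import FinFun.

(* If [G <=^d H] via [(f1, g1)] and [H <=^d G] via [(f2, g2)], then [g1 o g2]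
   is a surjective endomorphism of [G] (it is retracted by [f2 o f1]); Hopficity
   makes it injective, so [g2] is injective.  A retraction that is injective is
   a two-sided inverse, hence [f2 : H -> G] is an isomorphism. *)

Lemma is_hom_comp (X Y Z : Group) (f : X -> Y) (g : Y -> Z) :
  is_hom X Y f -> is_hom Y Z g -> is_hom X Z (fun x => g (f x)).
Proof.
  intros hf hg x y. rewrite hf. apply hg.
Qed.

Lemma retraction_surjective {A B : Type} (f : A -> B) (g : B -> A) :
  (forall a, g (f a) = a) -> surjective g.
Proof.
  intros gf a. exists (f a). apply gf.
Qed.

Lemma bijective_injective {A B : Type} (f : A -> B) :
  bijective f -> Injective f.
Proof.
  intros [g [gf _]] a b e. rewrite <- (gf a), <- (gf b), e. reflexivity.
Qed.

Lemma Injective_comp_r {A B C : Type} (h : A -> B) (g : B -> C) :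
  Injective (fun a => g (h a)) -> Injective h.
Proof.
  intros inj a b e. apply inj. rewrite e. reflexivity.
Qed.

Lemma section_bijective {A B : Type} (f : A -> B) (g : B -> A) :
  (forall a, g (f a) = a) -> Injective g -> bijective f.
Proof.
  intros gf ginj. exists g. split; [exact gf |].
  intros b. apply ginj. apply gf.
Qed.

Lemma Hopfian_surjective_injective (X : Group) (f : X -> X) :
  Hopfian X -> is_hom X X f -> surjective f -> Injective f.
Proof.
  intros hX hf sf. destruct (hX f hf sf) as [_ bf]. exact (bijective_injective f bf).
Qed.

Theorem proposition3p2 (G : Group) (hG : Hopfian G) :
  forall H : Group, d_le G H -> d_le H G -> isomorphic H G.
Proof.
  intros H [f1 [g1 [_ [hg1 g1f1]]]] [f2 [g2 [hf2 [hg2 g2f2]]]].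
  assert (surj : surjective (fun x => g1 (g2 x))).
  { apply (retraction_surjective (fun x => f2 (f1 x))).
    intros x. rewrite g2f2. apply g1f1. }
  assert (inj : Injective (fun x => g1 (g2 x))).
  { exact (Hopfian_surjective_injective G _ hG (is_hom_comp _ _ _ _ _ hg2 hg1) surj). }
  exists f2. split; [exact hf2 |].
  exact (section_bijective f2 g2 g2f2 (Injective_comp_r g2 g1 inj)).
Qed.
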